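(* There exists a feasible collaborative learning problem in the general PAC learning setting that has no stable equilibrium.
   Context: A collaborative learning problem has $k$ agents, a strategy space $\Theta\subseteq\mathbb{R}_+^k$, utility functions $u_i:\Theta\to\mathbb{R}$ and thresholds $\mu_i$; ${\boldsymbol\theta}$ is feasible if $u_i({\boldsymbol\theta})\ge\mu_i$ for all $i$, and the problem is feasible if some feasible ${\boldsymbol\theta}\in\Theta$ exists. A feasible ${\boldsymbol\theta}$ is a stable equilibrium if for no $i$ is there $\theta_i'<\theta_i$ with $(\theta_i',{\boldsymbol\theta}_{-i})\in\Theta$ and $u_i(\theta_i',{\boldsymbol\theta}_{-i})\ge\mu_i$ (where $(x,{\boldsymbol\theta}_{-i})$ replaces the $i$-th entry by $x$). In the general PAC learning setting, each agent $i$ has a distribution $\mathcal{D}_i$ over labeled examples $\mathcal{X}\times\mathcal{Y}$, agent $j$ draws $\theta_j$ (an integer) i.i.d. samples $S_j\sim\mathcal{D}_j^{\theta_j}$, a classifier $h_S$ is learned from the pooled sample $S=\cup_jS_j$, and $u_i({\boldsymbol\theta})=1-\mathbb{E}_{\{S_j\}}[\mathrm{err}_{\mathcal{D}_i}(h_S)]$ is agent $i$'s expected accuracy (in the construction, the distributions may themselves be random and $h_S$ is the optimal classifier given the observed samples). *)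

From HB Require Import structures.
From mathcomp Require Import all_boot all_order all_algebra.
From mathcomp Require Import reals.
Set Implicit Arguments. Unset Strict Implicit. Unset Printing Implicit Defensive.
Import Order.TTheory GRing.Theory Num.Theory.
Local Open Scope ring_scope.

(* Strategies are vectors theta : 'I_k -> nat (sample counts); the      *)
(* strategy space Theta is a predicate on such vectors.                 *)

Definition upd (k : nat) (th : 'I_k -> nat) (i : 'I_k) (x : nat) : 'I_k -> nat :=
  fun j => if j == i then x else th j.

Definition feasible_point (R : realType) (k : nat) (Theta : ('I_k -> nat) -> Prop)
    (u : 'I_k -> ('I_k -> nat) -> R) (mu : 'I_k -> R) (th : 'I_k -> nat) : Prop :=
  Theta th /\ forall i, mu i <= u i th.

Definition stable_equilibrium (R : realType) (k : nat) (Theta : ('I_k -> nat) -> Prop)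
    (u : 'I_k -> ('I_k -> nat) -> R) (mu : 'I_k -> R) (th : 'I_k -> nat) : Prop :=
  feasible_point Theta u mu th /\
  forall (i : 'I_k) (x : nat), (x < th i)%N -> Theta (upd th i x) ->
    ~ (mu i <= u i (upd th i x)).

(* General PAC learning setting (finite example / label / environment   *)
(* spaces).  The environment w : Omega is drawn from [prior]; given w,  *)
(* agent i's distribution over (X * Y)%type is D i w.                           *)

Definition is_pmf (R : realType) (T : finType) (p : T -> R) : Prop :=
  (forall t, 0 <= p t) /\ \sum_(t : T) p t = 1.

Definition sample_space (T : finType) (k : nat) (th : 'I_k -> nat) : finType :=
  {dffun forall j : 'I_k, (th j).-tuple T}.

Definition sample_prob (R : realType) (T : finType) (k : nat) (th : 'I_k -> nat)
    (D : 'I_k -> T -> R) (S : sample_space T th) : R :=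
  \prod_(j < k) \prod_(m < th j) D j (tnth (S j) m).

(* the pooled sample S = U_j S_j, as a multiset (count function) *)
Definition pooled (T : finType) (k : nat) (th : 'I_k -> nat)
    (S : sample_space T th) : {ffun T -> nat} :=
  [ffun z => \sum_(j < k) count_mem z (S j : seq T)].

Definition err (R : realType) (X Y : finType) (d : (X * Y)%type -> R) (g : X -> Y) : R :=
  \sum_(z : (X * Y)%type) d z * (g z.1 != z.2)%:R.

(* u_i(theta) = 1 - E[err_{D_i}(h_S)], expectation over the environment
   and over the samples; the learner h may depend on the (public)
   strategy vector theta and on the pooled sample. *)
Definition pac_utility (R : realType) (k : nat) (X Y Omega : finType)
    (prior : Omega -> R) (D : 'I_k -> Omega -> (X * Y)%type -> R)
    (h : ('I_k -> nat) -> {ffun (X * Y)%type -> nat} -> X -> Y)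
    (i : 'I_k) (th : 'I_k -> nat) : R :=
  1 - \sum_(w : Omega) prior w *
        \sum_(S : sample_space (X * Y)%type th)
          sample_prob (fun j => D j w) S * err (D i w) (h th (pooled S)).

(* joint (unnormalised posterior) expected error of g for agent i on the
   event that the observed pooled sample equals c *)
Definition joint_err (R : realType) (k : nat) (X Y Omega : finType)
    (prior : Omega -> R) (D : 'I_k -> Omega -> (X * Y)%type -> R)
    (th : 'I_k -> nat) (c : {ffun (X * Y)%type -> nat}) (i : 'I_k) (g : X -> Y) : R :=
  \sum_(w : Omega) prior w *
    \sum_(S : sample_space ((X * Y)%type) th | pooled S == c)
      sample_prob (fun j => D j w) S * err (D i w) g.

Definition bayes_optimal (R : realType) (k : nat) (X Y Omega : finType)
    (prior : Omega -> R) (D : 'I_k -> Omega -> (X * Y)%type -> R)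
    (h : ('I_k -> nat) -> {ffun (X * Y)%type -> nat} -> X -> Y) : Prop :=
  forall (th : 'I_k -> nat) (c : {ffun (X * Y)%type -> nat}) (i : 'I_k) (g : X -> Y),
    joint_err prior D th c i (h th c) <= joint_err prior D th c i g.

Definition pac_setting (R : realType) (k : nat) (X Y Omega : finType)
    (prior : Omega -> R) (D : 'I_k -> Omega -> (X * Y)%type -> R)
    (h : ('I_k -> nat) -> {ffun (X * Y)%type -> nat} -> X -> Y) : Prop :=
  [/\ is_pmf prior, (forall i w, is_pmf (D i w)) & bayes_optimal prior D h].

From HB Require Import structures.
From mathcomp Require Import all_boot all_order all_algebra.
From mathcomp Require Import reals.
From mathcomp Require Import lra.
Import Order.TTheory GRing.Theory Num.Theory.
Set Implicit Arguments. Unset Strict Implicit. Unset Printing Implicit Defensive.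
Local Open Scope ring_scope.

(* Two agents each hold a uniformly random secret bit.  Every example drawn by
   one agent exposes the other agent's bit in its features, while an agent's own
   examples reveal its own bit only with probability 1/2 each.  Hence, for the
   Bayes-optimal learner, agent i's accuracy is exactly 1 as soon as the other
   agent contributes a sample, and strictly below 1 otherwise.  With threshold 1
   the profile (1, 1) is feasible; but no agent's utility depends on its own
   contribution, so a stable equilibrium would have to be the zero profile,
   which is infeasible. *)

Lemma psumr_gt0 (R : numDomainType) (I : finType) (P : pred I) (F : I -> R) a :
  (forall i, P i -> 0 <= F i) -> P a -> 0 < F a -> 0 < \sum_(i | P i) F i.
Proof.
move=> F_ge0 Pa Fa_gt0; rewrite (bigD1 a) //= ltr_pwDl // sumr_ge0 // => i /andP[Pi _].
exact: F_ge0.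
Qed.

Lemma uniform_pmf (R : realType) (T : finType) (t0 : T) :
  is_pmf (fun _ : T => (#|T|%:R : R)^-1).
Proof.
split=> [t|]; first by rewrite invr_ge0 ler0n.
have T_gt0 : (0 < #|T|)%N by apply/card_gt0P; exists t0.
by rewrite sumr_const -[_ *+ _]mulr_natl mulfV // pnatr_eq0 -lt0n.
Qed.

Section Samples.
Variables (R : realType) (T : finType) (k : nat) (th : 'I_k -> nat) (d : 'I_k -> T -> R).

Lemma sample_prob_ge0 (S : sample_space T th) :
  (forall j t, 0 <= d j t) -> 0 <= sample_prob d S.
Proof. by move=> d_ge0; rewrite prodr_ge0 // => j _; rewrite prodr_ge0. Qed.

Lemma sample_prob_support (S : sample_space T th) j t :
  sample_prob d S != 0 -> t \in (S j : seq T) -> d j t != 0.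
Proof.
move/prodf_neq0/(_ j isT)/prodf_neq0 => S_supp /tnthP[m ->]; exact: S_supp.
Qed.

Lemma pooled_mem (S S' : sample_space T th) j t :
  pooled S' = pooled S -> t \in (S j : seq T) -> exists j', t \in (S' j' : seq T).
Proof.
move=> eqS tSj; apply/existsP; apply: contraT => /existsPn t_notin.
suff : pooled S t != 0%N by rewrite -eqS ffunE big1 // => j' _; exact/count_memPn.
by rewrite ffunE (bigD1 j) //= addn_eq0 negb_and -lt0n -has_count has_pred1 tSj.
Qed.

End Samples.

Section ErrorFacts.
Variables (R : realType) (X Y : finType) (d : (X * Y)%type -> R) (g : X -> Y).

Lemma err_eq0 : (forall z, d z != 0 -> g z.1 = z.2) -> err d g = 0.
Proof.
move=> g_ok; rewrite /err big1 // => z _.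
by have [->|/g_ok ->] := eqVneq (d z) 0; rewrite ?mul0r ?eqxx ?mulr0.
Qed.

Hypothesis d_ge0 : forall z, 0 <= d z.

Lemma err_ge0 : 0 <= err d g.
Proof. by rewrite sumr_ge0 // => z _; rewrite mulr_ge0. Qed.

Lemma err_gt0 z : 0 < d z -> g z.1 != z.2 -> 0 < err d g.
Proof.
move=> dz_gt0 gz_wrong; apply: (@psumr_gt0 _ _ _ _ z) => // [z' _|].
  by rewrite mulr_ge0.
by rewrite gz_wrong mulr1.
Qed.

End ErrorFacts.

Lemma free_riding_stable_equilibrium_eq0 (R : realType) (k : nat)
    (u : 'I_k -> ('I_k -> nat) -> R) (mu : 'I_k -> R) (th : 'I_k -> nat) :
  (forall i th x, mu i <= u i th -> mu i <= u i (upd th i x)) ->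
  stable_equilibrium (fun _ => True) u mu th -> forall i, th i = 0%N.
Proof.
move=> free_ride [[_ th_feasible] th_stable] i; apply/eqP; rewrite -leqn0 leqNgt.
by apply/negP => th_i_gt0; apply: (th_stable i 0%N) => //; exact/free_ride/th_feasible.
Qed.

Section PAC.
Variables (R : realType) (k : nat) (X Y Omega : finType).
Variables (prior : Omega -> R) (D : 'I_k -> Omega -> (X * Y)%type -> R).
Implicit Types (th : 'I_k -> nat) (c : {ffun (X * Y)%type -> nat}).

Definition likelihood th c (w : Omega) : R :=
  \sum_(S : sample_space (X * Y)%type th | pooled S == c) sample_prob (fun j => D j w) S.

Definition joint_prob th c (i : 'I_k) (z : (X * Y)%type) : R :=
  \sum_w prior w * likelihood th c w * D i w z.

Lemma joint_errE th c i (g : X -> Y) :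
  joint_err prior D th c i g = \sum_z joint_prob th c i z * (g z.1 != z.2)%:R.
Proof.
rewrite /joint_err /joint_prob /likelihood /err.
under [RHS]eq_bigr do rewrite big_distrl /=.
rewrite [RHS]exchange_big; apply: eq_bigr => w _.
under [RHS]eq_bigr do rewrite big_distrr /= big_distrl /= big_distrl /=.
rewrite [RHS]exchange_big big_distrr /=; apply: eq_bigr => S _.
by rewrite !big_distrr /=; apply: eq_bigr => z _; rewrite !mulrA.
Qed.

Lemma bayes_optimal_argmax (h : ('I_k -> nat) -> {ffun (X * Y)%type -> nat} -> X -> Y) :
  (forall th c i x y, joint_prob th c i (x, y) <= joint_prob th c i (x, h th c x)) ->
  bayes_optimal prior D h.
Proof.
move=> h_max th c i g.
have errE (f : X -> Y) : joint_err prior D th c i f =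
    \sum_x (\sum_y joint_prob th c i (x, y) - joint_prob th c i (x, f x)).
  transitivity (\sum_x \sum_y joint_prob th c i (x, y) * (f x != y)%:R).
    by rewrite joint_errE pair_bigA; apply: eq_bigr => -[].
  apply: eq_bigr => x _.
  rewrite (bigD1 (f x)) //= [in RHS](bigD1 (f x)) //= eqxx mulr0 add0r addrAC subrr add0r.
  by apply: eq_bigr => y; rewrite eq_sym => ->; rewrite mulr1.
by rewrite !errE; apply: ler_sum => x _; apply: lerB => //; exact: h_max.
Qed.

Lemma joint_prob_eq0 th c i z :
  (forall w, likelihood th c w != 0 -> D i w z = 0) -> joint_prob th c i z = 0.
Proof.
move=> D_eq0; rewrite /joint_prob big1 // => w _.
by have [->|/D_eq0 ->] := eqVneq (likelihood th c w) 0; rewrite ?mulr0 ?mul0r.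
Qed.

Variable h : ('I_k -> nat) -> {ffun (X * Y)%type -> nat} -> X -> Y.

Lemma pac_utility_eq1 i th :
  (forall w (S : sample_space (X * Y)%type th),
     sample_prob (fun j => D j w) S != 0 -> err (D i w) (h th (pooled S)) = 0) ->
  pac_utility prior D h i th = 1.
Proof.
move=> err0; rewrite /pac_utility big1 ?subr0 // => w _; rewrite big1 ?mulr0 // => S _.
by have [->|/err0 ->] := eqVneq (sample_prob (fun j => D j w) S) 0; rewrite ?mul0r ?mulr0.
Qed.

Section Nonnegative.
Hypotheses (prior_ge0 : forall w, 0 <= prior w) (D_ge0 : forall j w z, 0 <= D j w z).

Lemma likelihood_ge0 th c w : 0 <= likelihood th c w.
Proof. by rewrite sumr_ge0 // => S _; exact: sample_prob_ge0. Qed.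

Lemma likelihood_pooled_gt0 th w (S : sample_space (X * Y)%type th) :
  0 < sample_prob (fun j => D j w) S -> 0 < likelihood th (pooled S) w.
Proof. by move=> S_gt0; apply: (@psumr_gt0 _ _ _ _ S) => // S' _; exact: sample_prob_ge0. Qed.

Lemma joint_prob_ge0 th c i z : 0 <= joint_prob th c i z.
Proof. by rewrite sumr_ge0 // => w _; rewrite !mulr_ge0 ?likelihood_ge0. Qed.

Lemma joint_prob_gt0 th c i z w :
  0 < prior w -> 0 < likelihood th c w -> 0 < D i w z -> 0 < joint_prob th c i z.
Proof.
move=> prior_gt0 lik_gt0 D_gt0; apply: (@psumr_gt0 _ _ _ _ w) => // [w' _|].
  by rewrite !mulr_ge0 ?likelihood_ge0.
by rewrite !mulr_gt0.
Qed.

Lemma pac_utility_lt1 i th w (S : sample_space (X * Y)%type th) :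
  0 < prior w -> 0 < sample_prob (fun j => D j w) S -> 0 < err (D i w) (h th (pooled S)) ->
  pac_utility prior D h i th < 1.
Proof.
move=> prior_gt0 S_gt0 err_pos; rewrite /pac_utility ltrBlDr ltrDl.
apply: (@psumr_gt0 _ _ _ _ w) => // [w' _|].
  by rewrite mulr_ge0 // sumr_ge0 // => S' _; rewrite mulr_ge0 ?err_ge0 ?sample_prob_ge0.
rewrite mulr_gt0 //; apply: (@psumr_gt0 _ _ _ _ S) => // [S' _|].
  by rewrite mulr_ge0 ?err_ge0 ?sample_prob_ge0.
exact: mulr_gt0.
Qed.

End Nonnegative.

End PAC.

Definition other (i : 'I_2) : 'I_2 := lift i ord0.

Lemma other_neq i : other i != i.
Proof. by rewrite eq_sym neq_lift. Qed.

Lemma neq_other (i j : 'I_2) : j != i -> j = other i.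
Proof. by case: i j => [[|[|?]] ?] [[|[|?]] ?] //= _; apply/val_inj. Qed.

Lemma otherK : involutive other.
Proof. by move=> i; apply/esym/neq_other; rewrite eq_sym other_neq. Qed.

Section Construction.
Variable R : realType.

Definition Feature := ('I_2 * bool * bool)%type.
Definition Env := {ffun 'I_2 -> bool}.

Definition example (i : 'I_2) (w : Env) (b : bool) : (Feature * bool)%type :=
  ((i, b, w (other i)), b && w i).

Definition uniform (w : Env) : R := #|Env|%:R^-1.

Definition agent_dist (i : 'I_2) (w : Env) (z : Feature * bool) : R :=
  ((z == example i w false)%:R + (z == example i w true)%:R) / 2.

Definition learner th c (x : Feature) : bool :=
  joint_prob uniform agent_dist th c x.1.1 (x, false) <
  joint_prob uniform agent_dist th c x.1.1 (x, true).

Lemma uniform_ge0 w : 0 <= uniform w.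
Proof. by rewrite invr_ge0 ler0n. Qed.

Lemma uniform_gt0 w : 0 < uniform w.
Proof. by rewrite invr_gt0 ltr0n; apply/card_gt0P; exists w. Qed.

Lemma agent_dist_ge0 i w z : 0 <= agent_dist i w z.
Proof. by rewrite divr_ge0 ?addr_ge0. Qed.

Lemma agent_dist_example_gt0 i w b : 0 < agent_dist i w (example i w b).
Proof.
have neq10 : (example i w true == example i w false) = false by apply/eqP; case.
have neq01 : (example i w false == example i w true) = false by rewrite eq_sym.
by case: b; rewrite /agent_dist eqxx ?neq10 ?neq01 ?add0r ?addr0 mul1r invr_gt0 ltr0n.
Qed.

Lemma agent_dist_support i w z : agent_dist i w z != 0 -> exists b, z = example i w b.
Proof.
have [->|z_neq0] := eqVneq z (example i w false); first by exists false.
have [->|z_neq1] := eqVneq z (example i w true); first by exists true.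
by rewrite /agent_dist (negbTE z_neq0) (negbTE z_neq1) add0r mul0r eqxx.
Qed.

Lemma agent_dist_pmf i w : is_pmf (agent_dist i w).
Proof.
split=> [z|]; first exact: agent_dist_ge0.
have indicator_sum (p : Feature * bool) : \sum_z ((z == p)%:R : R) = 1.
  by rewrite (bigD1 p) //= eqxx big1 ?addr0 // => z /negbTE ->.
rewrite -big_distrl big_split /= !indicator_sum; lra.
Qed.

Notation joint := (joint_prob uniform agent_dist).

Lemma joint_ge0 th c i z : 0 <= joint th c i z.
Proof. exact: joint_prob_ge0 uniform_ge0 agent_dist_ge0 _ _ _ _. Qed.

Lemma joint_other_agent th c i (x : Feature) y : x.1.1 != i -> joint th c i (x, y) = 0.
Proof.
move=> x_not_i; apply: joint_prob_eq0 => w _; apply/eqP; apply: contraT.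
by case/agent_dist_support => b [x_eq _]; rewrite x_eq eqxx in x_not_i.
Qed.

Lemma learner_bayes_optimal : bayes_optimal uniform agent_dist learner.
Proof.
apply: bayes_optimal_argmax => th c i x y.
have [x_i|x_not_i] := eqVneq x.1.1 i; last by rewrite !joint_other_agent.
rewrite /learner x_i.
by case: y; case: ltrP => //; rewrite ?lexx // => /ltW.
Qed.

Lemma construction_pac_setting : pac_setting uniform agent_dist learner.
Proof.
split; first exact: (uniform_pmf _ [ffun=> false]).
  exact: agent_dist_pmf.
exact: learner_bayes_optimal.
Qed.

Lemma likelihood_reveals th i w (S : sample_space (Feature * bool)%type th) w' :
  (0 < th (other i))%N -> sample_prob (fun j => agent_dist j w) S != 0 ->
  likelihood agent_dist th (pooled S) w' != 0 -> w' i = w i.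
Proof.
(* The first example of agent [other i] in [S] carries [w i] in its features, and
   it occurs in every sample with the same pooled multiset. *)
move=> th_other_gt0 S_supp /eqP lik_neq0.
have [S' /andP[/eqP S'_pooled S'_gt0]] :=
  psumr_neq0P (fun S' _ => sample_prob_ge0 S' (agent_dist_ge0 ^~ w')) lik_neq0.
set t := tnth (S (other i)) (Ordinal th_other_gt0).
have t_in : t \in (S (other i) : seq _) by exact: mem_tnth.
have [b t_eq] := agent_dist_support (sample_prob_support S_supp t_in).
have [j t_in'] := pooled_mem S'_pooled t_in.
have [b' t_eq'] := agent_dist_support (sample_prob_support (lt0r_neq0 S'_gt0) t_in').
move: t_eq'; rewrite t_eq => -[j_eq _ w_eq _].
by rewrite -j_eq otherK in w_eq.
Qed.

Lemma learner_correct th i w (S : sample_space (Feature * bool)%type th) b :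
  (0 < th (other i))%N -> sample_prob (fun j => agent_dist j w) S != 0 ->
  learner th (pooled S) (example i w b).1 = (example i w b).2.
Proof.
move=> th_other_gt0 S_supp; rewrite /learner /=.
case: b; set x := (i, _, w (other i)); last first.
  have -> : joint th (pooled S) i (x, true) = 0.
    apply: joint_prob_eq0 => w' _; apply/eqP; apply: contraT.
    by case/agent_dist_support => -[] [].
  by rewrite ltNge joint_ge0.
have wrong_eq0 : joint th (pooled S) i (x, ~~ w i) = 0.
  apply: joint_prob_eq0 => w' lik_neq0; apply/eqP; apply: contraT.
  case/agent_dist_support => -[] [_ wi_eq] //.
  by rewrite (likelihood_reveals th_other_gt0 S_supp lik_neq0) in wi_eq; case: (w i) wi_eq.
have right_gt0 : 0 < joint th (pooled S) i (x, w i).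
  apply: (joint_prob_gt0 uniform_ge0 agent_dist_ge0 (uniform_gt0 w)).
    apply: likelihood_pooled_gt0 => [j|]; first exact: agent_dist_ge0.
    by rewrite lt0r S_supp sample_prob_ge0 // => j; exact: agent_dist_ge0.
  exact: (agent_dist_example_gt0 i w true).
by case: (w i) wrong_eq0 right_gt0 => /= -> // /ltW; rewrite ltNge => ->.
Qed.

Notation utility := (pac_utility uniform agent_dist learner).

Lemma utility_eq1 th i : (0 < th (other i))%N -> utility i th = 1.
Proof.
move=> th_other_gt0; apply: pac_utility_eq1 => w S S_supp; apply: err_eq0 => z.
by case/agent_dist_support => b ->; exact: learner_correct.
Qed.

Lemma utility_lt1 th i : th (other i) = 0%N -> utility i th < 1.
Proof.
(* Agent i's sample consists of unflagged examples only, which do not depend on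
   [w i]; so [w i] can be chosen opposite to the learner's guess on the flagged point. *)
move=> th_other0.
pose t := example i [ffun=> false] false.
pose S : sample_space (Feature * bool)%type th := [ffun j => [tuple of nseq (th j) t]].
pose w : Env := [ffun j => (j == i) && ~~ learner th (pooled S) (i, true, false)].
have t_eq : t = example i w false by rewrite /t /example !ffunE (negbTE (other_neq i)).
apply: (pac_utility_lt1 uniform_ge0 agent_dist_ge0 (uniform_gt0 w) (S := S)).
  rewrite prodr_gt0 // => j _; rewrite prodr_gt0 // => m _; rewrite ffunE tnth_nseq.
  have [->|j_neq] := eqVneq j i; first by rewrite t_eq agent_dist_example_gt0.
  by case: m; rewrite (neq_other j_neq) th_other0.
apply: (err_gt0 (agent_dist_ge0 i w) (agent_dist_example_gt0 i w true)) => /=.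
by rewrite !ffunE eqxx (negbTE (other_neq i)) /=; case: learner.
Qed.

Lemma utility_ge1 th i : (1 <= utility i th) = (0 < th (other i))%N.
Proof.
have [th_other0|th_other_gt0] := posnP (th (other i)).
  by rewrite leNgt utility_lt1.
by rewrite utility_eq1 ?lexx.
Qed.

End Construction.

Theorem theorem3 (R : realType) :
  exists (k : nat) (X Y Omega : finType) (prior : Omega -> R)
         (D : 'I_k -> Omega -> (X * Y)%type -> R)
         (h : ('I_k -> nat) -> {ffun (X * Y)%type -> nat} -> X -> Y)
         (mu : 'I_k -> R),
    pac_setting prior D h /\
    (exists th, feasible_point (fun _ => True) (pac_utility prior D h) mu th) /\
    (forall th, ~ stable_equilibrium (fun _ => True) (pac_utility prior D h) mu th).
Proof.
exists 2%N, Feature, bool, Env, (@uniform R), (@agent_dist R), (@learner R), (fun _ => 1).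
split; first exact: construction_pac_setting.
split; first by exists (fun _ => 1%N); split=> // i; rewrite utility_eq1.
move=> th th_stable.
have th0 : forall i, th i = 0%N.
  apply: free_riding_stable_equilibrium_eq0 th_stable => i th' x.
  by rewrite !utility_ge1 /upd (negbTE (other_neq i)).
have [[_ th_feasible] _] := th_stable.
by have := th_feasible ord0; rewrite utility_ge1 th0.
Qed.
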